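(* Let $T_1,T_2\in\mathcal{T}_n$ be binary phylogenetic trees. Let $G$ be the undirected multigraph with vertex set $\{1,\dots,2n-2\}$ and edge multiset $M(T_1)\sqcup M(T_2)$ (each member of $M(T_i)$ being a $2$-element set, viewed as an edge), and let $C$ be the set of connected components of $G$. Then $\mathit{TD}(T_1,T_2)=n-1-|C|$.
   Context: A phylogenetic tree is a finite rooted tree (arcs directed away from the root) with no node of outdegree $1$, whose leaves are injectively labeled; it is binary if every internal (non-leaf) node has exactly $2$ children. $\mathcal{T}_n$ denotes the set of phylogenetic trees with $n$ leaves labeled $1,\dots,n$, up to label-preserving isomorphism; $\mathcal{L}(T)$ is the set of leaves. The height of a node is the length of a longest directed path from it to a leaf. The bottom-up ordering of $T=(V,E)\in\mathcal{T}_n$ is the unique injective map $\ell:V\to\{1,\dots,|V|\}$ such that: (a) for a leaf $v$, $\ell(v)$ is its label; (b) if $\mathrm{height}(u)<\mathrm{height}(v)$ then $\ell(u)<\ell(v)$; (c) if $0<\mathrm{height}(u)=\mathrm{height}(v)$ and $\min\{\ell(x): x \text{ child of } u\}<\min\{\ell(x): x\text{ child of } v\}$ then $\ell(u)<\ell(v)$. The matching representation is $M(T)=\{\ell(\mathrm{children}(u)) : u\in V\setminus\mathcal{L}(T)\}$, a partition of $\{1,\dots,|V|-1\}$. For a subset $S=\{i_1<\dots<i_k\}$ with $k\ge 2$, $\kappa(S)$ is the cyclic permutation $(i_1,\dots,i_k)$. The matching permutation is $\pi(T)=\prod_{u\in V\setminus\mathcal{L}(T)}\kappa(\ell(\mathrm{children}(u)))$,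 regarded as an element of $\mathfrak{S}_{2n-2}$ fixing $|V|,\dots,2n-2$. Permutations are composed right to left. $\mathit{TD}'(T_1,T_2)$ is the least number of transpositions whose product is $\pi(T_2)^{-1}\pi(T_1)$ (zero if this is the identity), and the transposition distance is $\mathit{TD}(T_1,T_2)=\tfrac12\mathit{TD}'(T_1,T_2)$. *)

From HB Require Import structures.
From mathcomp Require Import all_boot all_order all_fingroup all_algebra.
Set Implicit Arguments. Unset Strict Implicit. Unset Printing Implicit Defensive.

(* Since children are unordered in the paper,
   a tree of T_n may have several representations; every notion below is
   invariant under swapping children. *)
Inductive btree : Type := BLeaf of nat | BNode of btree & btree.

Fixpoint btree_eqb (s t : btree) : bool :=
  match s, t with
  | BLeaf a, BLeaf b => a == b
  | BNode s1 s2, BNode t1 t2 => btree_eqb s1 t1 && btree_eqb s2 t2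
  | _, _ => false
  end.

Lemma btree_eqP : Equality.axiom btree_eqb.
Proof.
elim=> [a|s1 IH1 s2 IH2] [b|t1 t2] /=; try by constructor.
- by apply: (iffP eqP) => [->|[]].
- case: (IH1 t1) => [->|h]; last by constructor => -[].
  case: (IH2 t2) => [->|h]; last by constructor => -[].
  by constructor.
Qed.

HB.instance Definition _ := hasDecEq.Build btree btree_eqP.

Fixpoint leaves (t : btree) : seq nat :=
  match t with BLeaf a => [:: a] | BNode l r => leaves l ++ leaves r end.

Definition phylo (n : nat) (t : btree) : bool := perm_eq (leaves t) (iota 1 n).

(* Vertices of t, each identified with the subtree rooted at it (distinct
   vertices give distinct subtrees since leaf labels are distinct). *)
Fixpoint vertices (t : btree) : seq btree :=
  t :: match t with BLeaf _ => [::] | BNode l r => vertices l ++ vertices r end.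

Definition is_internal (t : btree) : bool :=
  if t is BNode _ _ then true else false.

Definition internals (t : btree) : seq btree := filter is_internal (vertices t).

Fixpoint height (t : btree) : nat :=
  match t with BLeaf _ => 0 | BNode l r => (maxn (height l) (height r)).+1 end.

Definition minchild (l : btree -> nat) (u : btree) : nat :=
  match u with BLeaf _ => 0 | BNode a b => minn (l a) (l b) end.

Definition bottom_up (t : btree) (l : btree -> nat) : bool :=
  let V := vertices t in
  [&& uniq (map l V),
      all (fun v => 1 <= l v <= size V) V,
      all (fun v => if v is BLeaf a then l v == a else true) V,
      all (fun u => all (fun v => (height u < height v) ==> (l u < l v)) V) V &
      all (fun u => all (fun v =>
             [&& 0 < height u, height u == height v &
                 minchild l u < minchild l v] ==> (l u < l v)) V) V].

(* Matching representation M(T): the list of the 2-element sets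
   l(children(u)) for u internal, each given as an (unordered) pair. *)
Definition matching (t : btree) (l : btree -> nat) : seq (nat * nat) :=
  [seq (match u with BLeaf _ => (0, 0) | BNode a b => (l a, l b) end)
  | u <- internals t].

(* Points 1..m are represented by 'I_m via i |-> i.+1. *)
Definition kappa (m : nat) (p : nat * nat) : {perm 'I_m} :=
  match insub (p.1.-1), insub (p.2.-1) with
  | Some x, Some y => tperm x y
  | _, _ => 1%g
  end.

(* Matching permutation pi(T) in S_{2n-2} (transpositions are disjoint,
   so the order of the product is irrelevant). *)
Definition matching_perm (n : nat) (t : btree) (l : btree -> nat)
  : {perm 'I_(2 * n - 2)} :=
  (\prod_(p <- matching t l) kappa (2 * n - 2) p)%g.

(* Paper's composition is right to left; mathcomp's (s * t) is "s then t".
   So pi(T2)^{-1} pi(T1) (paper) is pi(T1) * pi(T2)^-1 (mathcomp), and the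
   paper's product tau_1 ... tau_k is \prod over rev [:: tau_1; ...; tau_k]. *)
Definition prod_transp (m : nat) (s : seq ('I_m * 'I_m)) : {perm 'I_m} :=
  (\prod_(p <- rev s) tperm p.1 p.2)%g.

Definition min_transp (m : nat) (sigma : {perm 'I_m}) (k : nat) : Prop :=
  (exists s : seq ('I_m * 'I_m),
      [/\ size s = k, all (fun p => p.1 != p.2) s & sigma = prod_transp s])
  /\ (forall s : seq ('I_m * 'I_m),
      all (fun p => p.1 != p.2) s -> sigma = prod_transp s -> k <= size s).

Definition TDprime_is (n : nat) (t1 t2 : btree) (l1 l2 : btree -> nat) (k : nat)
  : Prop :=
  min_transp (matching_perm n t1 l1 * (matching_perm n t2 l2)^-1)%g k.

Definition TD_of (k : nat) : rat := (k%:R / 2)%R.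

Definition adj (m : nat) (E : seq (nat * nat)) : rel 'I_m :=
  fun x y => has (fun e => ((e.1 == x.+1) && (e.2 == y.+1))
                        || ((e.1 == y.+1) && (e.2 == x.+1))) E.

Definition components (m : nat) (E : seq (nat * nat)) : {set {set 'I_m}} :=
  [set [set y | connect (adj E) x y] | x : 'I_m].

From HB Require Import structures.
From mathcomp Require Import all_boot all_order all_fingroup all_algebra.
From mathcomp Require Import zify.
Set Implicit Arguments. Unset Strict Implicit. Unset Printing Implicit Defensive.

(* A bottom-up ordering gives the root the largest label 2n-1, so the labels
   of the non-root vertices are exactly 1..2n-2 and M(T) is a perfect matching
   on them; pi(T) is the corresponding fixed-point-free involution.  A
   permutation of m points is a product of no fewer than m - c transpositions,
   where c is its number of cycles, and m - c suffice.  If s1, s2 are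
   fixed-point-free involutions and rho = s1 s2, then s1 conjugates rho to
   rho^-1, so it maps the rho-cycle of x onto the rho-cycle of s1 x, which is a
   different cycle; the connected component of x in the union of the two
   matchings is the union of these two cycles.  Hence rho has 2|C| cycles and
   TD' = (2n-2) - 2|C|. *)

Section TranspositionLength.

Variable T : finType.
Implicit Types (s : {perm T}) (ts : seq (T * T)).

Lemma card_porbits1 : #|porbits (1 : {perm T})| = #|T|.
Proof.
rewrite /porbits card_imset // => x y /eqP; rewrite eq_porbit_mem.
by rewrite porbit.unlock cycle1 imset_set1 /aperm perm1 inE => /eqP.
Qed.

Lemma card_porbits_le s : #|porbits s| <= #|T|.
Proof. exact: leq_imset_card. Qed.

Lemma card_porbits_prod_tperm ts : all dpair ts ->
  #|T| <= #|porbits (\prod_(t <- ts) tperm t.1 t.2)%g| + size ts.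
Proof.
elim: ts => [|t ts IHts] /=; first by rewrite big_nil card_porbits1 addn0.
case/andP => /= t12 /IHts; rewrite big_cons.
have := porbits_mul_tperm (\prod_(t <- ts) tperm t.1 t.2)%g t.1 t.2.
by rewrite /= t12; case: (_ \notin _) => /=; lia.
Qed.

Lemma prod_tperm_card_porbits s : exists ts,
  [/\ size ts = #|T| - #|porbits s|, all dpair ts
    & s = (\prod_(t <- ts) tperm t.1 t.2)%g].
Proof.
have [k] := ubnP (#|T| - #|porbits s|); elim: k s => // k IHk s /ltnSE le_s_k.
case: (pickP (fun x => s x != x)) => [x sx_x | s_id]; last first.
  have -> : s = 1%g by apply/permP => x; apply/eqP/idPn; rewrite perm1 s_id.
  by exists [::]; rewrite card_porbits1 subnn big_nil.
set y := (s^-1)%g x.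
have x_in_y : x \in porbit s y by apply/porbitP; exists 1; rewrite expg1 permKV.
have x_neq_y : x != y by rewrite -(canF_eq (permK s)).
have split_cycle : #|porbits (tperm x y * s)%g| = #|porbits s|.+1.
  by have := porbits_mul_tperm s x y; rewrite /= x_in_y x_neq_y addn0 addn1.
have := card_porbits_le (tperm x y * s)%g; rewrite split_cycle => lt_s.
have [|ts [size_ts dts def_ts]] := IHk (tperm x y * s)%g; first lia.
exists ((x, y) :: ts); split => /=; first by rewrite size_ts split_cycle subnSK.
- by rewrite x_neq_y.
- by rewrite big_cons -def_ts mulgA tperm2 mul1g.
Qed.

End TranspositionLength.

Lemma min_transp_porbits m (s : {perm 'I_m}) : min_transp s (m - #|porbits s|).
Proof.
rewrite -[m in m - _]card_ord; split.
  have [ts [size_ts dts def_s]] := prod_tperm_card_porbits s.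
  by exists (rev ts); rewrite size_rev all_rev /prod_transp revK.
move=> ts dts ->; rewrite /prod_transp leq_subLR.
by have := @card_porbits_prod_tperm _ (rev ts); rewrite all_rev size_rev; apply.
Qed.

Definition pair_rel (T : finType) (s1 s2 : {perm T}) : rel T :=
  fun x y => (s1 x == y) || (s2 x == y).

Section FixedPointFreeInvolutions.

Variables (T : finType) (s1 s2 : {perm T}).
Hypotheses (s1K : involutive s1) (s2K : involutive s2).
Hypotheses (s1_neq : forall x, s1 x != x) (s2_neq : forall x, s2 x != x).

Local Notation rho := (s1 * s2)%g.
Local Notation e := (pair_rel s1 s2).

Lemma s1_rhoX i x : s1 ((rho ^+ i)%g x) = ((rho^-1) ^+ i)%g (s1 x).
Proof.
have s1_rho y : s1 (rho y) = (rho^-1)%g (s1 y).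
  by apply: (canRL (permK rho)); rewrite !permM s1K s2K.
elim: i x => [|i IHi] x; first by rewrite !expg0 !perm1.
by rewrite !expgS !permM -[s2 (s1 x)]permM IHi s1_rho.
Qed.

Lemma s1_porbit x y : y \in porbit rho x -> s1 y \in porbit rho (s1 x).
Proof. by case/porbitP => i ->; rewrite s1_rhoX -porbitV mem_porbit. Qed.

(* Write k = 2j + r: then s1 fixes rho^j x if r = 0,
   and s2 fixes s1 (rho^j x) if r = 1. *)
Lemma s1_notin_porbit x : s1 x \notin porbit rho x.
Proof.
apply/porbitP => -[k s1x].
have [j [r def_k]] : exists j (r : bool), k = j + (r + j).
  by exists k./2, (odd k); have := odd_double_half k; rewrite -addnn; lia.
set y := (rho ^+ j)%g x.
have s1y : s1 y = (rho ^+ r)%g y.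
  by rewrite /y s1_rhoX s1x def_k !expgD !permM expgVn permK.
case: r s1y {def_k} => /= [|] s1y.
  by have := s2_neq (s1 y); rewrite -permM s1y expg1 eqxx.
by have := s1_neq y; rewrite s1y expg0 perm1 eqxx.
Qed.

Lemma pair_rel_sym : symmetric e.
Proof. by move=> x y; rewrite /pair_rel (inv_eq s1K) (inv_eq s2K) ![x == _]eq_sym. Qed.

Lemma connect_pair_rel x y :
  connect e x y = (y \in porbit rho x) || (y \in porbit rho (s1 x)).
Proof.
have connect_porbit z w : w \in porbit rho z -> connect e z w.
  case/porbitP => i ->; elim: i => [|i IHi]; first by rewrite expg0 perm1 connect0.
  rewrite expgSr !permM; apply: (connect_trans IHi).
  apply: (connect_trans (y := s1 ((rho ^+ i)%g z))); apply: connect1;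
    by rewrite /pair_rel eqxx ?orbT.
apply/idP/idP => [|/orP[/connect_porbit //|/connect_porbit]]; last first.
  by apply: connect_trans; rewrite connect1 // /pair_rel eqxx.
set S := porbit rho x :|: porbit rho (s1 x).
have rho_porbit z : porbit rho (rho z) = porbit rho z.
  by have := porbit_perm rho 1 z; rewrite expg1.
have s1S z : z \in S -> s1 z \in S.
  rewrite !inE => /orP[/s1_porbit ->|/s1_porbit]; first by rewrite orbT.
  by rewrite s1K => ->.
have rhoS z : z \in S -> rho z \in S by rewrite !inE -!eq_porbit_mem rho_porbit.
have closedS : closed e S.
  apply: intro_closed; first exact: sym_connect_sym pair_rel_sym.
  move=> z w /orP[] /eqP <- /s1S // /rhoS.
  by rewrite permM s1K.
by move/(closed_connect closedS); rewrite !inE porbit_id /= => <-.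
Qed.

Lemma card_porbits_mul_invol :
  #|porbits rho| = 2 * #|[set [set y | connect e x y] | x : T]|.
Proof.
pose comp x := [set y | connect e x y].
pose compO (O : {set T}) := [set y | [exists z in O, connect e z y]].
have compO_porbit x : compO (porbit rho x) = comp x.
  apply/setP => y; rewrite !inE; apply/existsP/idP => [[z /andP[xz zy]]|xy].
    by apply: connect_trans zy; rewrite connect_pair_rel xz.
  by exists x; rewrite porbit_id.
have comp_s1 x : comp (s1 x) = comp x.
  apply/setP => y; rewrite !inE.
  apply: same_connect; first exact: sym_connect_sym pair_rel_sym.
  by rewrite connect1 // /pair_rel s1K eqxx.
rewrite -sum1_card (partition_big compO (mem [set comp x | x : T])) /=; last first.
  by move=> O /imsetP[x _ ->]; rewrite compO_porbit imset_f.
rewrite (eq_bigr (fun _ => 2)) ?sum_nat_const 1?mulnC // => C /imsetP[x _ ->].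
rewrite sum1dep_card.
have -> : [set O | (O \in porbits rho) && (compO O == comp x)]
          = [set porbit rho x; porbit rho (s1 x)].
  apply/setP => O; rewrite !inE; apply/andP/orP => [[/imsetP[z _ ->]]|].
    rewrite compO_porbit => /eqP comp_zx.
    have : z \in comp x by rewrite -comp_zx inE connect0.
    by rewrite inE connect_pair_rel -!eq_porbit_mem => /orP[]; [left|right].
  by case=> /eqP ->; rewrite imset_f // compO_porbit ?comp_s1.
by rewrite cards2 eq_porbit_mem porbit_sym (negbTE (s1_notin_porbit x)).
Qed.

End FixedPointFreeInvolutions.

Definition endpoints (M : seq (nat * nat)) : seq nat :=
  flatten [seq [:: p.1; p.2] | p <- M].

Lemma endpoints_cons p M : endpoints (p :: M) = p.1 :: p.2 :: endpoints M.
Proof. by []. Qed.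

Lemma endpoints_cat M1 M2 : endpoints (M1 ++ M2) = endpoints M1 ++ endpoints M2.
Proof. by rewrite /endpoints map_cat flatten_cat. Qed.

Section PairsPerm.

Variable m : nat.
Implicit Types (M : seq (nat * nat)) (x y : 'I_m).

Definition pairs_perm M : {perm 'I_m} := (\prod_(p <- M) kappa m p)%g.

Definition endpoints_bounded M := all (fun a => 0 < a <= m) (endpoints M).

Lemma kappaE p x : 0 < p.1 <= m -> 0 < p.2 <= m ->
  val (kappa m p x) =
    if x.+1 == p.1 then p.2.-1 else if x.+1 == p.2 then p.1.-1 else val x.
Proof.
case: p => a b /= a_bd b_bd; rewrite /kappa /=.
case: insubP => [u _ val_u|]; last lia.
case: insubP => [v _ val_v|]; last lia.
have eq_u : (x == u) = (x.+1 == a) by rewrite -val_eqE val_u /=; apply/eqP/eqP; lia.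
have eq_v : (x == v) = (x.+1 == b) by rewrite -val_eqE val_v /=; apply/eqP/eqP; lia.
rewrite -eq_u -eq_v; case: tpermP => [->|->|/eqP/negbTE-> /eqP/negbTE->] //.
  by rewrite eqxx val_v.
by rewrite eqxx; case: eqP => [<-|_]; rewrite -?val_u -?val_v.
Qed.

Lemma adj_cons p M x y : adj (p :: M) x y =
  [|| (p.1 == x.+1) && (p.2 == y.+1), (p.1 == y.+1) && (p.2 == x.+1) | adj M x y].
Proof. by rewrite /adj /= orbA. Qed.

Lemma adj_cat M1 M2 x y : adj (M1 ++ M2) x y = adj M1 x y || adj M2 x y.
Proof. exact: has_cat. Qed.

Lemma adj_sym M : symmetric (@adj m M).
Proof. by move=> x y; apply: eq_has => p; rewrite orbC. Qed.

Lemma adj_endpoints M x y : adj M x y -> x.+1 \in endpoints M.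
Proof.
elim: M => [|p M IHM] //; rewrite adj_cons endpoints_cons !inE.
by case/or3P => [/andP[/eqP-> _]|/andP[_ /eqP->]|/IHM->]; rewrite ?eqxx ?orbT.
Qed.

Lemma adj_irrefl M x : uniq (endpoints M) -> ~~ adj M x x.
Proof.
elim: M => [|p M IHM] //; rewrite adj_cons orbA orbb endpoints_cons /= inE.
case/andP => /norP[p12 _] /andP[_ /IHM/negbTE->]; rewrite orbF.
by apply: contra p12 => /andP[/eqP-> /eqP->].
Qed.

Lemma pairs_perm_cons p M x : pairs_perm (p :: M) x = pairs_perm M (kappa m p x).
Proof. by rewrite /pairs_perm big_cons permM. Qed.

Lemma pairs_perm_id M x :
  endpoints_bounded M -> x.+1 \notin endpoints M -> pairs_perm M x = x.
Proof.
elim: M => [|p M IHM]; first by rewrite /pairs_perm big_nil perm1.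
rewrite /endpoints_bounded endpoints_cons /= !inE.
case/and3P => p1_bd p2_bd M_bd /norP[x_p1 /norP[x_p2 x_M]].
rewrite pairs_perm_cons -{2}(IHM M_bd x_M); congr (pairs_perm M _).
by apply: val_inj; rewrite kappaE // (negbTE x_p1) (negbTE x_p2).
Qed.

Lemma pairs_perm_adj M x y : endpoints_bounded M -> uniq (endpoints M) ->
  adj M x y -> pairs_perm M x = y.
Proof.
elim: M => [|p M IHM] //.
rewrite adj_cons pairs_perm_cons /endpoints_bounded endpoints_cons /= !inE.
case/and3P => p1_bd p2_bd M_bd /andP[/norP[p12 p1_M] /andP[p2_M uM]].
rewrite orbA; case/orP => [xy_p|xy_M]; last first.
  have x_M := adj_endpoints xy_M.
  rewrite -(IHM M_bd uM xy_M); congr (pairs_perm M _); apply: val_inj.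
  have x_neq a : a \notin endpoints M -> x.+1 != a by apply: contraNneq => <-.
  by rewrite kappaE // !ifN ?x_neq.
have kappa_x : kappa m p x = y.
  apply: val_inj; rewrite kappaE //.
  case/orP: xy_p => /andP[/eqP-> /eqP->]; rewrite eqxx //=.
  by case: eqP => // -[->].
rewrite kappa_x pairs_perm_id //.
by case/orP: xy_p => [/andP[_ /eqP<-]|/andP[/eqP<- _]].
Qed.

Lemma adj_exists M x :
  endpoints_bounded M -> x.+1 \in endpoints M -> exists y, adj M x y.
Proof.
elim: M => [|p M IHM] //.
rewrite /endpoints_bounded endpoints_cons [all _ _]/= !inE.
case/and3P => p1_bd p2_bd M_bd /or3P[/eqP x_p1|/eqP x_p2|/(IHM M_bd)[y xy]].
- have p2_lt : p.2.-1 < m by lia.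
  by exists (Ordinal p2_lt); rewrite adj_cons /= x_p1 eqxx prednK //; lia.
- have p1_lt : p.1.-1 < m by lia.
  exists (Ordinal p1_lt); rewrite adj_cons /= x_p2 eqxx prednK ?orbT //; lia.
- by exists y; rewrite adj_cons xy !orbT.
Qed.

Variable M : seq (nat * nat).
Hypothesis M_perfect : perm_eq (endpoints M) (iota 1 m).

Let M_bounded : endpoints_bounded M.
Proof. by apply/allP => a; rewrite (perm_mem M_perfect) mem_iota; lia. Qed.

Let M_uniq : uniq (endpoints M).
Proof. by rewrite (perm_uniq M_perfect) iota_uniq. Qed.

Lemma pairs_permE x y : (pairs_perm M x == y) = adj M x y.
Proof.
have [z xz] : exists z, adj M x z.
  apply: adj_exists M_bounded _.
  by rewrite (perm_mem M_perfect) mem_iota add1n !ltnS ltn_ord.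
apply/eqP/idP => [<-|]; last exact: pairs_perm_adj.
by rewrite (pairs_perm_adj M_bounded M_uniq xz).
Qed.

Lemma pairs_perm_neq x : pairs_perm M x != x.
Proof. by rewrite pairs_permE adj_irrefl. Qed.

Lemma pairs_permK : involutive (pairs_perm M).
Proof. by move=> x; apply/eqP; rewrite pairs_permE adj_sym -pairs_permE. Qed.

End PairsPerm.

Lemma vertices_root t : vertices t = t :: behead (vertices t).
Proof. by case: t. Qed.

Lemma matching_node a b l :
  matching (BNode a b) l = (l a, l b) :: matching a l ++ matching b l.
Proof. by rewrite /matching /internals /= filter_cat map_cat. Qed.

Lemma endpoints_matching t l :
  perm_eq (endpoints (matching t l)) (map l (behead (vertices t))).
Proof.
elim: t => [a|a IHa b IHb] //=.
rewrite matching_node endpoints_cons endpoints_cat map_cat.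
rewrite (vertices_root a) (vertices_root b) /= perm_cons perm_sym.
by rewrite -cat1s perm_catCA /= perm_cons perm_sym perm_cat.
Qed.

Lemma size_leaves_gt0 t : 0 < size (leaves t).
Proof. by elim: t => //= a IHa b _; rewrite size_cat addn_gt0 IHa. Qed.

Lemma size_vertices t : size (vertices t) = (size (leaves t)).*2.-1.
Proof.
elim: t => //= a IHa b IHb; rewrite !size_cat IHa IHb.
have := size_leaves_gt0 a; have := size_leaves_gt0 b; lia.
Qed.

Lemma height_vertices t v : v \in vertices t -> height v <= height t.
Proof.
elim: t => [a|a IHa b IHb]; first by rewrite inE => /eqP ->.
by rewrite /= inE mem_cat => /orP[/eqP -> //|/orP[/IHa|/IHb]] /=; lia.
Qed.

Lemma height_proper_vertices t v : v \in behead (vertices t) -> height v < height t.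
Proof. by case: t => //= a b; rewrite mem_cat => /orP[|] /height_vertices; lia. Qed.

Section BottomUpOrdering.

Variables (t : btree) (l : btree -> nat).
Hypothesis t_l : bottom_up t l.
Local Notation V := (vertices t).

Lemma bottom_up_labels : perm_eq (map l V) (iota 1 (size V)).
Proof.
case/and5P: t_l => l_uniq l_range _ _ _.
have l_sub : {subset map l V <= iota 1 (size V)}.
  by move=> _ /mapP[v vV ->]; rewrite mem_iota; have := allP l_range v vV; lia.
apply: uniq_perm l_uniq (iota_uniq _ _) (uniq_min_size l_uniq l_sub _).2.
by rewrite size_iota size_map.
Qed.

Lemma bottom_up_root : l t = size V.
Proof.
case/and5P: t_l => _ l_range _ l_height _.
have tV : t \in V by rewrite vertices_root mem_head.
have /mapP[v vV l_v] : size V \in map l V.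
  by rewrite (perm_mem bottom_up_labels) mem_iota add1n ltnSn andbT vertices_root.
have [v_t|v_t] := eqVneq v t; first by rewrite l_v v_t.
have v_proper : v \in behead V by move: vV; rewrite vertices_root inE (negbTE v_t).
have := implyP (allP (allP l_height v vV) t tV) (height_proper_vertices v_proper).
by have := allP l_range t tV; lia.
Qed.

Lemma endpoints_matching_bottom_up :
  perm_eq (endpoints (matching t l)) (iota 1 (size V).-1).
Proof.
apply: perm_trans (endpoints_matching t l) _.
have [k size_V] : exists k, size V = k.+1 by exists (size V).-1; rewrite vertices_root.
have := bottom_up_labels; rewrite {1}vertices_root /= bottom_up_root size_V => labels.
rewrite -(perm_cons k.+1) (perm_trans labels) //.
by rewrite succnK -[k.+1]addn1 iotaD perm_catC addn1 add1n.
Qed.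

End BottomUpOrdering.

Lemma endpoints_matching_phylo n t l : phylo n t -> bottom_up t l ->
  perm_eq (endpoints (matching t l)) (iota 1 (2 * n - 2)).
Proof.
move=> /perm_size; rewrite size_iota => size_t /endpoints_matching_bottom_up.
by rewrite size_vertices size_t (_ : n.*2.-1.-1 = 2 * n - 2) //; lia.
Qed.

Theorem proposition5 (n : nat) (T1 T2 : btree) (l1 l2 : btree -> nat) :
  phylo n T1 -> phylo n T2 ->
  bottom_up T1 l1 -> bottom_up T2 l2 ->
  exists k : nat, TDprime_is n T1 T2 l1 l2 k /\
    TD_of k = ((n%:Z - 1 - (#|components (2 * n - 2)
                    (matching T1 l1 ++ matching T2 l2)|)%:Z)%:~R)%R.
Proof.
move=> T1_n T2_n T1_l T2_l.
have n_gt0 : 0 < n by rewrite -(size_iota 1 n) -(perm_size T1_n) size_leaves_gt0.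
have M1 := endpoints_matching_phylo T1_n T1_l.
have M2 := endpoints_matching_phylo T2_n T2_l.
set m := 2 * n - 2 in M1 M2 *.
set s1 : {perm 'I_m} := pairs_perm m (matching T1 l1).
set s2 : {perm 'I_m} := pairs_perm m (matching T2 l2).
have s2V : (s2^-1)%g = s2.
  by apply/permP => x; rewrite -{1}(pairs_permK M2 x) permK.
have -> : components m (matching T1 l1 ++ matching T2 l2) =
          [set [set y | connect (pair_rel s1 s2) x y] | x : 'I_m].
  apply: eq_imset => x; apply/setP => y; rewrite !inE; apply: eq_connect => u v.
  by rewrite adj_cat -!pairs_permE.
have orbits_rho := card_porbits_mul_invol (pairs_permK M1) (pairs_permK M2)
  (pairs_perm_neq M1) (pairs_perm_neq M2).
exists (m - #|porbits (s1 * s2^-1)%g|); split; first exact: min_transp_porbits.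
have := card_porbits_le (s1 * s2)%g.
rewrite s2V orbits_rho card_ord /m; set c := #|_| => c_le.
have -> : (n%:Z - 1 - c%:Z = (n - 1 - c)%N%:Z)%R by lia.
by rewrite /TD_of (_ : _ - 2 * c = (n - 1 - c) * 2) ?GRing.natrM ?GRing.mulfK //; lia.
Qed.
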